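(* Let $G=(V,E)$ be an $(n-4)$-regular graph on $n>4$ nodes. Let $\emptyset\ne V'\subseteq V$ with $|V'|=tn$, and let $\alpha n$ be the number of nodes of a largest clique in the induced subgraph $G[V']$. Then $$\mathsf M(V')\le\frac{4t^2+2\alpha-3t}{n-4}.$$
   Context: For a finite simple undirected graph $G=(V,E)$ with $m=|E|\ge1$ edges, degrees $d_v$, and $a_{u,v}=1$ if $\{u,v\}\in E$ and $0$ otherwise: for $C\subseteq V$, $\mathsf M(C)=\frac{1}{2m}\sum_{u\in C}\sum_{v\in C}\big(a_{u,v}-\frac{d_ud_v}{2m}\big)$, the sum over all ordered pairs including $u=v$. *)

From HB Require Import structures.
From mathcomp Require Import all_boot all_order all_algebra.
Set Implicit Arguments. Unset Strict Implicit. Unset Printing Implicit Defensive.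
Import Order.TTheory GRing.Theory Num.Theory.

Definition simple_graph (T : finType) (e : rel T) : Prop :=
  symmetric e /\ irreflexive e.

Definition deg (T : finType) (e : rel T) (v : T) : nat := #|[set u | e v u]|.

Definition nedges (T : finType) (e : rel T) : nat :=
  #|[set p : T * T | e p.1 p.2 && (enum_rank p.1 < enum_rank p.2)%N]|.

Local Open Scope ring_scope.
Definition adj (R : pzRingType) (T : finType) (e : rel T) (u v : T) : R :=
  (e u v)%:R.

Definition modularity (R : fieldType) (T : finType) (e : rel T) (C : {set T}) : R :=
  let m2 : R := (2 * nedges e)%:R in
  m2^-1 * \sum_(u in C) \sum_(v in C)
     (adj R e u v - (deg e u)%:R * (deg e v)%:R / m2).
Local Close Scope ring_scope.

Definition is_clique (T : finType) (e : rel T) (K : {set T}) : bool :=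
  [forall u in K, forall v in K, (u != v) ==> e u v].

Definition clique_number_in (T : finType) (e : rel T) (C : {set T}) : nat :=
  \max_(K : {set T} | (K \subset C) && is_clique e K) #|K|.

(* Let k = |V'| and A the number of ordered adjacent pairs in V'.  Every
   ordered pair of V' is adjacent, non-adjacent with distinct entries, or
   diagonal, so A + N + k = k^2 with N the number of non-adjacent ones.
   Removing an endpoint of a non-adjacent pair loses one vertex but at least two
   ordered non-adjacent pairs; iterating until a clique remains gives
   2k <= 2 alpha n + N, hence A + 3k <= k^2 + 2 alpha n.  In a d-regular graph
   2m = nd and M(V') = (A - d k^2 / n) / (nd); for d = n - 4, multiplying the
   claimed bound by n(n - 4) turns it into exactly A + 3k <= k^2 + 2 alpha n. *)
From HB Require Import structures.
From mathcomp Require Import all_boot all_order all_algebra.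
From mathcomp Require Import zify ring lra.
Import Order.TTheory GRing.Theory Num.Theory.

Set Implicit Arguments.
Unset Strict Implicit.

Lemma sum_pairs_card (T : finType) (S : {set T}) (b : rel T) :
  (\sum_(u in S) \sum_(v in S) b u v)%N =
  #|[set p : T * T | [&& p.1 \in S, p.2 \in S & b p.1 p.2]]|.
Proof.
rewrite pair_big_dep /= -sum1_card big_mkcond [RHS]big_mkcond /=.
by apply: eq_bigr => p _; rewrite inE; case: (p.1 \in S); case: (p.2 \in S); case: b.
Qed.

Section SimpleGraph.
Variables (T : finType) (e : rel T).
Hypothesis esym : symmetric e.
Hypothesis eirr : irreflexive e.

Definition adj_count (S : {set T}) : nat := \sum_(u in S) \sum_(v in S) e u v.

Definition nonadj_pairs (S : {set T}) : {set T * T} :=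
  [set p | [&& p.1 \in S, p.2 \in S, p.1 != p.2 & ~~ e p.1 p.2]].

Lemma exists_clique_nonadj_pairs (S : {set T}) :
  exists2 K : {set T}, (K \subset S) && is_clique e K &
    (2 * #|S| <= 2 * #|K| + #|nonadj_pairs S|)%N.
Proof.
move: {2}#|S| (leqnn #|S|) => N; elim: N S => [|N IH] S leSN.
  exists S; last by rewrite leq_addr.
  move: leSN; rewrite leqn0 cards_eq0 subxx => /eqP ->.
  by apply/forall_inP => u; rewrite inE.
have [cliqueS | /forall_inPn [x xS /forall_inPn [y yS]]] := boolP (is_clique e S).
  by exists S; [rewrite subxx cliqueS | rewrite leq_addr].
rewrite negb_imply => /andP [neq_xy nexy].
have leSxN : (#|S :\ x| <= N)%N by move: leSN; rewrite (cardsD1 x S) xS.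
have [K /andP [sKSx cliqueK] leSxK] := IH _ leSxN.
exists K; first by rewrite cliqueK (subset_trans sKSx) // subD1set.
have sub_nonadj : nonadj_pairs (S :\ x) \subset nonadj_pairs S :\ (x, y) :\ (y, x).
  apply/subsetP => -[u v]; rewrite !inE /=.
  case/and4P => /andP [ux uS] /andP [vx vS] uv nuv.
  by rewrite uS vS uv nuv !andbT -!pair_eqE /= !negb_and ux vx orbT.
have card_nonadj : #|nonadj_pairs S| = (2 + #|nonadj_pairs S :\ (x, y) :\ (y, x)|)%N.
  rewrite (cardsD1 (x, y)) (cardsD1 (y, x) (nonadj_pairs S :\ (x, y))).
  rewrite !inE /= xS yS neq_xy nexy (eq_sym y x) neq_xy esym nexy /=.
  by rewrite -pair_eqE /= negb_and neq_xy orbT.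
move: leSxK (subset_leq_card sub_nonadj).
rewrite (cardsD1 x S) xS card_nonadj /=; lia.
Qed.

Lemma clique_number_nonadj_pairs (S : {set T}) :
  (2 * #|S| <= 2 * clique_number_in e S + #|nonadj_pairs S|)%N.
Proof.
have [K cliqueK leSK] := exists_clique_nonadj_pairs S.
apply: leq_trans leSK _; rewrite leq_add2r leq_mul2l /=.
exact: (@leq_bigmax_cond _ (fun K : {set T} => (K \subset S) && is_clique e K) _ K cliqueK).
Qed.

Lemma adj_count_nonadj_pairs (S : {set T}) :
  (adj_count S + #|nonadj_pairs S| + #|S| = #|S| ^ 2)%N.
Proof.
have -> : #|nonadj_pairs S| = (\sum_(u in S) \sum_(v in S) ((u != v) && ~~ e u v))%N.
  by rewrite sum_pairs_card; apply: eq_card => p; rewrite !inE.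
rewrite /adj_count -[X in _ + X = _]sum1_card -!big_split /= -mulnn -sum_nat_const.
apply: eq_bigr => u uS; rewrite -big_split /= -sum1_card.
rewrite (bigD1 u uS) [RHS](bigD1 u uS) /= eqxx eirr add0n addnC.
congr (1 + _); apply: eq_bigr => v /andP [_ vu].
by rewrite eq_sym vu; case: (e u v).
Qed.

Lemma adj_count_le (S : {set T}) :
  (adj_count S + 3 * #|S| <= #|S| ^ 2 + 2 * clique_number_in e S)%N.
Proof.
have := adj_count_nonadj_pairs S; have := clique_number_nonadj_pairs S; lia.
Qed.

Lemma card_arcs : #|[set p : T * T | e p.1 p.2]| = (2 * nedges e)%N.
Proof.
set E := [set p : T * T | e p.1 p.2].
set L := [set p : T * T | e p.1 p.2 && (enum_rank p.1 < enum_rank p.2)%N].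
have swapK : involutive (fun p : T * T => (p.2, p.1)) by case.
have EIL : E :&: L = L by apply/setIidPr/subsetP => p; rewrite !inE => /andP [].
have EDL : E :\: L = [set (p.2, p.1) | p in L].
  apply/setP => -[u v]; rewrite !inE /=; apply/idP/imsetP.
    case/andP => nLuv euv; exists (v, u) => //.
    rewrite inE /= esym euv /=; move: nLuv; rewrite euv /= -leqNgt leq_eqVlt.
    case/orP => // /eqP /ord_inj /enum_rank_inj eq_vu.
    by rewrite eq_vu eirr in euv.
  case=> -[a b]; rewrite inE /= => /andP [eab lt_ab] [-> ->].
  by rewrite esym eab /= -leqNgt ltnW.
rewrite -(cardsID L E) EIL EDL card_imset; last exact: inv_inj.
by rewrite mul2n -addnn.
Qed.

Lemma sum_deg : (\sum_u deg e u)%N = (2 * nedges e)%N.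
Proof.
under eq_bigr do rewrite /deg -sum1_card big_mkcond /=.
rewrite pair_big -card_arcs -sum1_card [RHS]big_mkcond /=.
by apply: eq_bigr => p _; rewrite !inE.
Qed.

Lemma nedges_regular (d : nat) : (forall v, deg e v = d) -> (2 * nedges e = #|T| * d)%N.
Proof.
by move=> regd; rewrite -sum_deg (eq_bigr _ (fun v _ => regd v)) sum_nat_const.
Qed.

Local Open Scope ring_scope.

Lemma modularity_regular (R : fieldType) (d : nat) (S : {set T}) :
  (forall v, deg e v = d) ->
  let m2 : R := (2 * nedges e)%:R in
  modularity R e S = m2^-1 * ((adj_count S)%:R - d%:R ^+ 2 / m2 * #|S|%:R ^+ 2).
Proof.
move=> regd m2; rewrite /modularity -/m2; clearbody m2; congr (_ * _).
have -> : (adj_count S)%:R = \sum_(u in S) \sum_(v in S) adj R e u v.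
  rewrite /adj_count natr_sum; apply: eq_bigr => u _.
  by rewrite natr_sum; apply: eq_bigr.
under eq_bigr do under eq_bigr do rewrite !regd.
under eq_bigr do rewrite sumrB sumr_const.
by rewrite sumrB sumr_const; ring.
Qed.

End SimpleGraph.

Local Open Scope ring_scope.

Lemma modularity_bound_algebra (R : realFieldType) (n A k c : R) :
  4 < n -> A + 3 * k <= k ^+ 2 + 2 * c ->
  (n * (n - 4))^-1 * (A - (n - 4) ^+ 2 / (n * (n - 4)) * k ^+ 2)
  <= (4 * (k / n) ^+ 2 + 2 * (c / n) - 3 * (k / n)) / (n - 4).
Proof.
move=> n_gt4 leAk; have n_gt0 : 0 < n by lra.
have d_gt0 : 0 < n - 4 by lra.
rewrite -subr_ge0.
have -> : (4 * (k / n) ^+ 2 + 2 * (c / n) - 3 * (k / n)) / (n - 4) -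
    (n * (n - 4))^-1 * (A - (n - 4) ^+ 2 / (n * (n - 4)) * k ^+ 2)
    = (k ^+ 2 + 2 * c - (A + 3 * k)) / (n * (n - 4)).
  by field; rewrite !gt_eqF.
by apply: divr_ge0; [rewrite subr_ge0 | apply: mulr_ge0; apply: ltW].
Qed.

Theorem lemma4 (R : realFieldType) (T : finType) (e : rel T)
  (Hsimple : simple_graph e)
  (Hn : (4 < #|T|)%N)
  (Hreg : forall v : T, deg e v = (#|T| - 4)%N)
  (V' : {set T}) (HV' : V' != set0) :
  let n : R := (#|T|)%:R in
  let t : R := (#|V'|)%:R / n in
  let alpha : R := (clique_number_in e V')%:R / n in
  modularity R e V' <= (4 * t ^+ 2 + 2 * alpha - 3 * t) / (n - 4).
Proof.
cbv zeta; case: Hsimple => esym eirr.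
have d_eq : (#|T| - 4)%:R = #|T|%:R - 4 :> R by rewrite natrB // ltnW.
rewrite (modularity_regular R V' Hreg) (nedges_regular esym eirr Hreg) natrM d_eq.
apply: modularity_bound_algebra; first by rewrite ltr_nat.
have := adj_count_le esym eirr V'.
by rewrite -(ler_nat R) !natrD !natrM; lra.
Qed.
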